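(* Let $\Sigma$ be a finite alphabet, $\lambda\in[0,1)$, and let $L=\mathcal{L}^{>\lambda}(\mathcal{A}|\mathrm{ND})$ for some quantum automaton $\mathcal{A}$ over $\Sigma$. Then: (1) For any $w\in\Sigma^+$, $u\in\Sigma^*$ and $v\in\Sigma^\omega$, if $uv\in L$ then there are infinitely many positive integers $k$ such that $uw^kv\in L$. (2) For any $v\in L$, there are infinitely many finite prefixes $v_n$ of $v$ such that $v_nw^\omega\in L$ for all $w\in\Sigma^+$.
   Context: A quantum automaton is a tuple $\mathcal{A}=(\mathcal{H},|s_0\rangle,\Sigma,\{U_\sigma:\sigma\in\Sigma\},F)$ where $\mathcal{H}$ is a finite-dimensional complex Hilbert space, $|s_0\rangle$ a unit vector, $\Sigma$ a finite alphabet, each $U_\sigma$ unitary on $\mathcal{H}$, and $F$ a subspace of $\mathcal{H}$. For a finite word $x=\sigma_1\cdots\sigma_m$, $U_x=U_{\sigma_m}\cdots U_{\sigma_1}$. For $w\in\Sigma^\omega$ with prefixes $w_n$ of length $n$, the non-disturbing run is $|s_n\rangle=U_{w_n}|s_0\rangle$ and $$f^{\mathrm{ND}}_{\mathcal{A}}(w)=\sup_{|\psi\rangle\in F,\ \||\psi\rangle\|=1}\sup_{\{n_i\}}\inf_{i\ge1}|\langle\psi|s_{n_i}\rangle|^2,$$ over strictly increasing sequences $0\le n_1<n_2<\cdots$. $\mathcal{L}^{>\lambda}(\mathcal{A}|\mathrm{ND})=\{w\in\Sigma^\omega: f^{\mathrm{ND}}_{\mathcal{A}}(w)>\lambda\}$.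 $w^\omega$ denotes the infinite repetition of $w$. *)

From HB Require Import structures.
From mathcomp Require Import all_boot all_order all_algebra.
From mathcomp Require Import all_classical all_reals.
From mathcomp Require Import complex.
Set Implicit Arguments. Unset Strict Implicit. Unset Printing Implicit Defensive.
Import Order.TTheory GRing.Theory Num.Theory.
Local Open Scope ring_scope.
Local Open Scope classical_set_scope.

Definition sqmod (R : realType) (z : R[i]) : R := complex.Re z ^+ 2 + complex.Im z ^+ 2.

Definition braket (R : realType) (d : nat) (psi s : 'cV[R[i]]_d) : R[i] :=
  \sum_(j < d) (conjc (psi j 0)) * s j 0.

Definition sqnorm (R : realType) (d : nat) (x : 'cV[R[i]]_d) : R :=
  \sum_(j < d) sqmod (x j 0).

Definition adjmx (R : realType) (d : nat) (U : 'M[R[i]]_d) : 'M[R[i]]_d :=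
  (map_mx (@conjc R) U)^T.
Definition unitary (R : realType) (d : nat) (U : 'M[R[i]]_d) : Prop :=
  adjmx U *m U = 1%:M.

(* A quantum automaton (H = C^d, |s0>, Sigma, {U_sigma}, F).  The subspace F
   is the row space of a matrix; membership of a column vector psi in F is
   (psi^T <= FM)%MS. *)
Record qaut (R : realType) (Sigma : finType) (d : nat) := QAut {
  qa_s0 : 'cV[R[i]]_d;
  qa_U : Sigma -> 'M[R[i]]_d;
  qa_F : 'M[R[i]]_d
}.

Definition wf_qaut (R : realType) (Sigma : finType) (d : nat)
  (A : qaut R Sigma d) : Prop :=
  sqnorm (qa_s0 A) = 1 /\ forall a : Sigma, unitary (qa_U A a).

Definition inF (R : realType) (Sigma : finType) (d : nat)
  (A : qaut R Sigma d) (psi : 'cV[R[i]]_d) : bool :=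
  (psi^T <= qa_F A)%MS.

Definition oword (Sigma : Type) := nat -> Sigma.

(* Non-disturbing run: s_0 = s0, s_{n+1} = U_{w(n)} s_n, so that
   s_n = U_{w_n} s0 with U_{s1...sm} = U_{sm} ... U_{s1}. *)
Fixpoint run (R : realType) (Sigma : finType) (d : nat)
  (A : qaut R Sigma d) (w : oword Sigma) (n : nat) : 'cV[R[i]]_d :=
  match n with
  | 0 => qa_s0 A
  | n'.+1 => qa_U A (w n') *m run A w n'
  end.

Definition fND (R : realType) (Sigma : finType) (d : nat)
  (A : qaut R Sigma d) (w : oword Sigma) : R :=
  sup [set r : R | exists psi : 'cV[R[i]]_d,
        [/\ inF A psi, sqnorm psi = 1 &
         exists nseq : nat -> nat,
           (forall i, (nseq i < nseq i.+1)%N) /\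
           r = inf [set sqmod (braket psi (run A w (nseq i))) | i in [set: nat]]]].

Definition LND (R : realType) (Sigma : finType) (d : nat)
  (A : qaut R Sigma d) (lambda : R) : set (oword Sigma) :=
  [set w | lambda < fND A w].

Definition catw (Sigma : Type) (u : seq Sigma) (v : oword Sigma) : oword Sigma :=
  fun n => if (n < size u)%N then nth (v 0%N) u n else v (n - size u)%N.

Definition wpow (Sigma : Type) (w : seq Sigma) (k : nat) : seq Sigma :=
  flatten (nseq k w).

(* w^omega for the nonempty finite word x :: w'. *)
Definition womega (Sigma : Type) (x : Sigma) (w' : seq Sigma) : oword Sigma :=
  fun n => nth x (x :: w') (n %% (size w').+1).

Definition wprefix (Sigma : Type) (v : oword Sigma) (n : nat) : seq Sigma :=
  mkseq v n.

From HB Require Import structures.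
From mathcomp Require Import all_boot all_order all_algebra.
From mathcomp Require Import all_classical all_reals.
From mathcomp Require Import complex.
From mathcomp Require Import ring lra zify.
Import Order.TTheory GRing.Theory Num.Theory.
Local Open Scope ring_scope.
Local Open Scope classical_set_scope.
Set Implicit Arguments. Unset Strict Implicit. Unset Printing Implicit Defensive.

(* A word is in L when some unit psi in F and some subsequence of the run
   satisfy |<psi|s_n>|^2 >= c > lambda, and this bound survives uniformly small
   perturbations of the states.  Unitary dynamics on the unit sphere is
   recurrent: a finite net of the sphere and the pigeonhole principle give, for
   any unitary W and unit x, infinitely many m with W^m x close to x.  In (1),
   reading w^m after u turns the state X into W^m X and the rest of the run
   applies the same unitaries as for uv, so the witness of uv transfers to
   u w^m v whenever W^m X is close to X.  In (2), cut v at a witness position n;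
   along w^omega the state s_n recurs infinitely often, and these returns form
   a new witness subsequence. *)

Section ComplexModulus.
Variable R : realType.
Implicit Types a b z : R[i].

Lemma sqmod_ge0 z : 0 <= sqmod z.
Proof. by rewrite addr_ge0 ?sqr_ge0. Qed.

Lemma sqmodM a b : sqmod (a * b) = sqmod a * sqmod b.
Proof. by case: a b => a1 a2 [b1 b2]; rewrite /sqmod /=; ring. Qed.

Lemma sqmodJ z : sqmod (conjc z) = sqmod z.
Proof. by case: z => z1 z2; rewrite /sqmod /= sqrrN. Qed.

Lemma sqmodD_le a b (N Q : R) : 0 < N -> sqmod a <= N * Q ->
  sqmod (a + b) <= (N + 1) * (Q + sqmod b).
Proof.
case: a b => a1 a2 [b1 b2]; rewrite /sqmod /= => N_gt0 a_le.
set lhs := (a1 + b1) ^+ 2 + _; set rhs := (N + 1) * _.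
suff : 0 <= N * (rhs - lhs) by rewrite pmulr_rge0 // subr_ge0.
have -> : N * (rhs - lhs) = (N * b1 - a1) ^+ 2 + (N * b2 - a2) ^+ 2
                            + (N + 1) * (N * Q - (a1 ^+ 2 + a2 ^+ 2)).
  by rewrite /lhs /rhs; ring.
by rewrite !addr_ge0 ?sqr_ge0 // mulr_ge0 ?subr_ge0 //; lra.
Qed.

Lemma sqmod_sum_le n (F : 'I_n -> R[i]) :
  sqmod (\sum_(i < n) F i) <= n%:R * \sum_(i < n) sqmod (F i).
Proof.
elim: n F => [|n IH] F; first by rewrite !big_ord0 /sqmod /= expr0n /= addr0 mul0r.
rewrite !big_ord_recr /= -natr1.
case: n IH F => [|n] IH F; first by rewrite !big_ord0 !add0r mul1r.
by apply: sqmodD_le; rewrite ?ltr0Sn //; apply: IH.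
Qed.

Lemma sqmodD_ge a b (K eta : R) : 1 <= K -> 0 <= eta ->
  sqmod a <= K -> sqmod b <= eta ^+ 2 -> sqmod a - 4 * K * eta <= sqmod (a + b).
Proof.
case: a b => a1 a2 [b1 b2]; rewrite /sqmod /= => K_ge1 eta_ge0 ha hb.
have [ha1 ha1' ha2 ha2'] : [/\ a1 <= K, - K <= a1, a2 <= K & - K <= a2].
  by split; nra.
have [hb1 hb1' hb2 hb2'] : [/\ b1 <= eta, - eta <= b1, b2 <= eta & - eta <= b2].
  by split; nra.
have [p1 p2] : - (K * eta) <= a1 * b1 /\ - (K * eta) <= a2 * b2 by split; nra.
nra.
Qed.

End ComplexModulus.

Section Vectors.
Variables (R : realType) (d : nat).
Implicit Types (x y z e psi : 'cV[R[i]]_d) (U V : 'M[R[i]]_d).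

Lemma sqnorm_ge0 x : 0 <= sqnorm x.
Proof. by rewrite sumr_ge0 // => j _; apply: sqmod_ge0. Qed.

Lemma sqmod_entry_le x j : sqmod (x j 0) <= sqnorm x.
Proof. by rewrite /sqnorm (bigD1 j) //= lerDl sumr_ge0 // => i _; apply: sqmod_ge0. Qed.

Lemma braketDr psi y e : braket psi (y + e) = braket psi y + braket psi e.
Proof. by rewrite /braket -big_split; apply: eq_bigr => j _; rewrite mxE mulrDr. Qed.

Lemma sqmod_braket_le psi e : sqmod (braket psi e) <= d%:R * (sqnorm psi * sqnorm e).
Proof.
apply: le_trans (sqmod_sum_le _) _; rewrite ler_wpM2l // /sqnorm mulr_sumr ler_sum // => j _.
by rewrite sqmodM sqmodJ ler_wpM2r ?sqmod_ge0 ?sqmod_entry_le.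
Qed.

Lemma sqnormE x : sqnorm x = complex.Re (((map_mx conjc x)^T *m x) 0 0).
Proof.
rewrite mxE (raddf_sum (@complex.Re R)); apply: eq_bigr => j _.
by rewrite !mxE; case: (x j 0) => a b; rewrite /sqmod /=; ring.
Qed.

Lemma sqnorm_unitary U x : unitary U -> sqnorm (U *m x) = sqnorm x.
Proof.
rewrite /unitary /adjmx !sqnormE map_mxM trmx_mul -mulmxA (mulmxA _ U) => ->.
by rewrite mul1mx.
Qed.

Lemma unitary1 : unitary (1%:M : 'M[R[i]]_d).
Proof. by rewrite /unitary /adjmx map_mx1 trmx1 mulmx1. Qed.

Lemma unitaryM U V : unitary U -> unitary V -> unitary (U *m V).
Proof.
rewrite /unitary /adjmx map_mxM trmx_mul => hU hV.
by rewrite mulmxA -(mulmxA _ _ U) hU mulmx1 hV.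
Qed.

Lemma unitaryX U k : unitary U -> unitary (U ^+ k).
Proof.
move=> hU; elim: k => [|k IH]; first exact: unitary1.
by rewrite exprS -mulmxE; apply: unitaryM.
Qed.

Lemma sqmod_braket_continuous (eps : R) : 0 < eps ->
  exists2 delta : R, 0 < delta & forall psi y z,
    sqnorm psi = 1 -> sqnorm y = 1 -> sqnorm (z - y) <= delta ->
    sqmod (braket psi y) - eps <= sqmod (braket psi z).
Proof.
move=> eps_gt0; pose K : R := d.+1%:R; pose eta := eps / (4 * K).
have K_gt0 : 0 < K by rewrite ltr0n.
have eta_gt0 : 0 < eta by rewrite divr_gt0 ?mulr_gt0.
exists (eta ^+ 2 / K) => [|psi y z psi1 y1 close]; first by rewrite divr_gt0 ?exprn_gt0.
have dK : d%:R <= K by rewrite ler_nat.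
have -> : eps = 4 * K * eta by rewrite /eta mulrCA mulfV ?mulr1 // mulf_neq0 ?gt_eqF.
rewrite -[z](subrK y) braketDr [braket _ (z - y) + _]addrC.
apply: sqmodD_ge; [by rewrite ler1n | exact: ltW | |].
  by apply: le_trans (sqmod_braket_le _ _) _; rewrite psi1 y1 mul1r mulr1.
apply: le_trans (sqmod_braket_le _ _) _; rewrite psi1 mul1r.
apply: le_trans (ler_wpM2r (sqnorm_ge0 _) dK) _.
by rewrite -ler_pdivlMl // mulrC.
Qed.

End Vectors.

Lemma sqr_le1_itv (R : realDomainType) (t : R) : t ^+ 2 <= 1 -> -1 <= t <= 1.
Proof. by rewrite -ler_norml -(expr_le1 (n := 2) _ (normr_ge0 t)) // real_normK ?num_real. Qed.

Lemma truncn_eq_dist (R : archiRealFieldType) (p q : R) : 0 <= p -> 0 <= q ->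
  Num.truncn p = Num.truncn q -> (p - q) ^+ 2 <= 1.
Proof.
move=> p0 q0 pq; have /andP[lep ltp] := truncn_itv p0; have /andP[leq ltq] := truncn_itv q0.
rewrite pq -natr1 in lep ltp; rewrite -natr1 in ltq.
move: ((Num.truncn q)%:R : R) lep ltp leq ltq => n; nra.
Qed.

Lemma quantize_interval (R : archiRealFieldType) (delta : R) : 0 < delta <= 1 ->
  exists n (b : R -> 'I_n), forall s t,
    s ^+ 2 <= 1 -> t ^+ 2 <= 1 -> b s = b t -> (s - t) ^+ 2 <= delta.
Proof.
case/andP=> delta_gt0 delta_le1; pose N := Num.truncn (2 / delta).
pose c (t : R) := Num.truncn ((t + 1) / delta).
have c_ge0 t : t ^+ 2 <= 1 -> 0 <= (t + 1) / delta.
  by move=> /sqr_le1_itv t1; rewrite divr_ge0 ?(ltW delta_gt0) //; lra.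
have c_le t : t ^+ 2 <= 1 -> (c t < N.+1)%N.
  by move=> /sqr_le1_itv t1; rewrite ltnS le_truncn // ler_pM2r ?invr_gt0 //; lra.
exists N.+1, (fun t => inord (c t)) => s t s1 t1 /(congr1 val).
rewrite /= !inordK ?c_le // => /(truncn_eq_dist (c_ge0 s s1) (c_ge0 t t1)).
rewrite -mulrBl opprD addrACA subrr addr0 expr_div_n ler_pdivrMr ?exprn_gt0 // mul1r => st.
by apply: le_trans st _; rewrite expr2 ler_piMr ?(ltW delta_gt0).
Qed.

Lemma finType_seq_repeat (T : finType) (h : nat -> T) : exists k l, (k < l)%N /\ h k = h l.
Proof.
have /injectivePn[i [j ij hij]] : ~~ injectiveb (fun i : 'I_#|T|.+1 => h i).
  by apply/injectiveP => /leq_card; rewrite card_ord ltnn.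
case: (ltngtP i j) => [lt|gt|/val_inj eq]; last by rewrite eq eqxx in ij.
- by exists i, j.
- by exists j, i.
Qed.

Lemma increasing_seq_unbounded (P : nat -> Prop) :
  (forall M, exists2 k, (M < k)%N & P k) ->
  exists2 g : nat -> nat, (forall i, (g i < g i.+1)%N) & forall i, P (g i).
Proof.
move=> unbounded; pose next M := projT1 (cid2 (unbounded M)).
have nextP M : (M < next M)%N /\ P (next M) by rewrite /next; case: cid2.
by exists (fun i => iter i.+1 next 0%N) => i; [apply: (nextP _).1 | apply: (nextP _).2].
Qed.

Lemma infinite_set_unbounded (P : set nat) :
  (forall M, exists2 k, (M < k)%N & P k) -> infinite_set P.
Proof.
move=> /increasing_seq_unbounded[g g_incr gP].
apply/infiniteP/pcard_leP/injfunPex; exists g => // i j _ _.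
exact/incn_inj/leq_mono/(homo_ltn ltn_trans g_incr).
Qed.

Lemma increasing_ge (ns : nat -> nat) :
  (forall i, (ns i < ns i.+1)%N) -> forall i, (i <= ns i)%N.
Proof. by move=> ns_incr; elim=> // i IH; apply: leq_ltn_trans IH (ns_incr i). Qed.

Section Recurrence.
Variables (R : realType) (d : nat).
Implicit Types (x y : 'cV[R[i]]_d) (W : 'M[R[i]]_d).

Lemma quantize_unit_sphere (g : R) : 0 < g ->
  exists (T : finType) (q : 'cV[R[i]]_d -> T), forall x y,
    sqnorm x = 1 -> sqnorm y = 1 -> q x = q y -> sqnorm (x - y) <= g.
Proof.
move=> g_gt0; pose delta := g / (2 * d%:R + g).
have den_gt0 : 0 < 2 * d%:R + g by rewrite ltr_wpDl ?mulr_ge0.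
have delta_gt0 : 0 < delta by rewrite divr_gt0.
have delta_le1 : delta <= 1 by rewrite ler_pdivrMr // mul1r lerDr mulr_ge0.
have [n [b bP]] : exists n (b : R -> 'I_n), forall s t,
    s ^+ 2 <= 1 -> t ^+ 2 <= 1 -> b s = b t -> (s - t) ^+ 2 <= delta.
  by apply: quantize_interval; rewrite delta_gt0.
exists {ffun 'I_d -> 'I_n * 'I_n}.
exists (fun x => [ffun j => (b (complex.Re (x j 0)), b (complex.Im (x j 0)))]).
move=> x y x1 y1 /ffunP qxy.
have entry_le x' j : sqnorm x' = 1 ->
    complex.Re (x' j 0) ^+ 2 <= 1 /\ complex.Im (x' j 0) ^+ 2 <= 1.
  move=> <-; split; apply: le_trans (sqmod_entry_le x' j).
    by rewrite lerDl sqr_ge0.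
  by rewrite lerDr sqr_ge0.
apply: le_trans (_ : \sum_(j < d) 2 * delta <= g).
  apply: ler_sum => j _; move: (qxy j); rewrite !ffunE => -[qRe qIm].
  have [xRe xIm] := entry_le x j x1; have [yRe yIm] := entry_le y j y1.
  have := bP _ _ xRe yRe qRe; have := bP _ _ xIm yIm qIm.
  rewrite !mxE; case: (x j 0) (y j 0) => a1 a2 [b1 b2]; rewrite /sqmod /=; lra.
rewrite sumr_const card_ord -mulr_natr.
have : delta * (2 * d%:R + g) = g by rewrite mulfVK ?gt_eqF.
nra.
Qed.

Lemma unitary_recurrence W x (g : R) : unitary W -> sqnorm x = 1 -> 0 < g ->
  forall M, exists2 m, (M < m)%N & sqnorm (W ^+ m *m x - x) <= g.
Proof.
move=> hW x1 g_gt0 M; pose V := W ^+ M.+1.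
have hV k : unitary (V ^+ k) by apply/unitaryX/unitaryX.
have [T [q qP]] := quantize_unit_sphere g_gt0.
have [k [l [kl qkl]]] := finType_seq_repeat (fun k => q (V ^+ k *m x)).
exists (M.+1 * (l - k))%N; first by rewrite -subn_gt0 in kl; nia.
rewrite -(sqnorm_unitary _ (hV k)) exprM -/V mulmxBr mulmxA mulmxE -exprD subnKC 1?ltnW //.
by apply: qP; rewrite ?sqnorm_unitary.
Qed.

End Recurrence.

Section Words.
Variable Sigma : Type.
Implicit Types (u w : seq Sigma) (v : oword Sigma).

Lemma wpowS w k : wpow w k.+1 = w ++ wpow w k.
Proof. by []. Qed.

Lemma wprefix_catw u v n : wprefix (catw u v) (size u + n) = u ++ wprefix v n.
Proof.
apply: (@eq_from_nth _ (v 0%N)) => [|i]; first by rewrite size_cat !size_mkseq.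
rewrite size_mkseq nth_cat => lt_i; rewrite nth_mkseq // /catw.
by case: ltnP => // ge_i; rewrite nth_mkseq // ltn_subLR.
Qed.

Lemma catw_womega (x : Sigma) w' : catw (x :: w') (womega x w') = womega x w'.
Proof.
apply: funext => i; rewrite /catw /womega; case: ltnP => [small|large].
  by rewrite (modn_small small); apply: set_nth_default.
by rewrite -{2}(subnK large) modnDr.
Qed.

Lemma wprefix_womega (x : Sigma) w' k :
  wprefix (womega x w') (k * size (x :: w')) = wpow (x :: w') k.
Proof.
elim: k => [|k IH]; first by [].
by rewrite mulSn -{1}catw_womega wprefix_catw IH.
Qed.

End Words.

Section WordMatrices.
Variables (R : realType) (Sigma : finType) (d : nat) (U : Sigma -> 'M[R[i]]_d).

Fixpoint wordmx (p : seq Sigma) : 'M[R[i]]_d :=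
  if p is a :: p' then wordmx p' *m U a else 1%:M.

Lemma wordmx_cat p q : wordmx (p ++ q) = wordmx q *m wordmx p.
Proof. by elim: p => [|a p IH] /=; rewrite ?mulmx1 // IH mulmxA. Qed.

Lemma wordmx_wpow w k : wordmx (wpow w k) = wordmx w ^+ k.
Proof. by elim: k => [|k IH]; rewrite ?expr0 // wpowS wordmx_cat IH exprSr mulmxE. Qed.

Lemma unitary_wordmx p : (forall a, unitary (U a)) -> unitary (wordmx p).
Proof. by move=> hU; elim: p => [|a p IH] /=; [apply: unitary1 | apply: unitaryM]. Qed.

End WordMatrices.

Lemma run_wordmx (R : realType) (Sigma : finType) (d : nat) (A : qaut R Sigma d) w n :
  run A w n = wordmx (qa_U A) (wprefix w n) *m qa_s0 A.
Proof.
elim: n => [|n IH]; first by rewrite mul1mx.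
by rewrite [LHS]/= IH /wprefix mkseqS -cats1 wordmx_cat /= mul1mx mulmxA.
Qed.

Lemma run_catw (R : realType) (Sigma : finType) (d : nat) (A : qaut R Sigma d) u v n :
  run A (catw u v) (size u + n) =
  wordmx (qa_U A) (wprefix v n) *m (wordmx (qa_U A) u *m qa_s0 A).
Proof. by rewrite run_wordmx wprefix_catw wordmx_cat mulmxA. Qed.

Section NonDisturbing.
Variables (R : realType) (Sigma : finType) (d : nat) (A : qaut R Sigma d) (lambda : R).
Hypotheses (wfA : wf_qaut A) (lambda_ge0 : 0 <= lambda).

Lemma sqnorm_run w n : sqnorm (run A w n) = 1.
Proof.
have [s0_1 hU] := wfA; rewrite run_wordmx sqnorm_unitary //; exact: unitary_wordmx.
Qed.

Lemma fND_ge w psi ns c : inF A psi -> sqnorm psi = 1 -> (forall i, (ns i < ns i.+1)%N) ->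
  (forall i, c <= sqmod (braket psi (run A w (ns i)))) -> c <= fND A w.
Proof.
move=> psiF psi1 ns_incr c_le.
pose V psi' ns' := [set sqmod (braket psi' (run A w (ns' i))) | i in [set: nat]].
have V_lb psi' ns' : has_lbound (V psi' ns').
  by exists 0 => _ [i _ <-]; apply: sqmod_ge0.
apply: le_trans (_ : inf (V psi ns) <= _).
  by apply: lb_le_inf => [|_ [i _ <-] //]; exists (sqmod (braket psi (run A w (ns 0%N)))), 0%N.
apply: ub_le_sup; last by exists psi; split => //; exists ns.
exists d%:R => _ [psi' [_ psi'1 [ns' [_ ->]]]].
apply: le_trans (ge_inf (V_lb psi' ns') (imageP _ (I : [set: nat] 0%N))) _.
by apply: le_trans (sqmod_braket_le _ _) _; rewrite psi'1 sqnorm_run !mulr1.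
Qed.

Lemma LND_witness w : LND A lambda w ->
  exists psi ns c, [/\ inF A psi, sqnorm psi = 1, (forall i, (ns i < ns i.+1)%N),
    lambda < c & forall i, c <= sqmod (braket psi (run A w (ns i)))].
Proof.
rewrite /LND /fND /=; set S := [set r : R | _].
(* [sup set0 = 0], which [0 <= lambda] rules out. *)
have [S0|/set0P/negP/negPn/eqP->] := pselect (S !=set0); last first.
  by rewrite sup0 => /(le_lt_trans lambda_ge0); rewrite ltxx.
case/(sup_gt S0) => _ [psi [psiF psi1 [ns [ns_incr ->]]]] lambda_lt.
exists psi, ns, (inf [set sqmod (braket psi (run A w (ns i))) | i in [set: nat]]).
split => // i; apply: ge_inf; last by exists i.
by exists 0 => _ [j _ <-]; apply: sqmod_ge0.
Qed.

Lemma LND_of_close psi c : inF A psi -> sqnorm psi = 1 -> lambda < c ->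
  exists2 delta : R, 0 < delta & forall w ns (ys : nat -> 'cV[R[i]]_d),
    (forall i, (ns i < ns i.+1)%N) ->
    (forall i, sqnorm (ys i) = 1 /\ c <= sqmod (braket psi (ys i))) ->
    (forall i, sqnorm (run A w (ns i) - ys i) <= delta) -> LND A lambda w.
Proof.
move=> psiF psi1 lambda_lt; pose eps := (c - lambda) / 2.
have [|delta delta_gt0 cont] := @sqmod_braket_continuous R d eps.
  by rewrite divr_gt0 // subr_gt0.
exists delta => // w ns ys ns_incr ys_c close.
apply: (@lt_le_trans _ _ (c - eps)); first by rewrite /eps; lra.
apply: (fND_ge psiF psi1 ns_incr) => i; have [ys1 c_le] := ys_c i.
by apply: le_trans (cont _ _ _ psi1 ys1 (close i)); rewrite lerD2r.
Qed.

Lemma LND_catw_wpow w u v : LND A lambda (catw u v) ->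
  infinite_set [set k : nat | (0 < k)%N /\ LND A lambda (catw (u ++ wpow w k) v)].
Proof.
case/LND_witness=> [psi [ns [c [psiF psi1 ns_incr lt_c c_le]]]].
have [delta delta_gt0 LND_close] := LND_of_close psiF psi1 lt_c.
have [s0_1 hU] := wfA; pose X := wordmx (qa_U A) u *m qa_s0 A.
have X1 : sqnorm X = 1 by rewrite /X sqnorm_unitary //; apply: unitary_wordmx.
apply: infinite_set_unbounded => M.
have [m lt_Mm close] := unitary_recurrence (unitary_wordmx w hU) X1 delta_gt0 M.
exists m => //; split; first exact: leq_ltn_trans lt_Mm.
(* Witness positions are taken past [u], so that they fall in the [v] part. *)
pose t i := (ns (i + size u) - size u)%N.
have ns_t i : ns (i + size u) = (size u + t i)%N.
  by rewrite subnKC // (leq_trans (leq_addl i _) (increasing_ge ns_incr _)).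
apply: (LND_close _ (fun i => size (u ++ wpow w m) + t i)%N
                    (fun i => run A (catw u v) (ns (i + size u)))).
- by move=> i; rewrite ltn_add2l -(ltn_add2l (size u)) -!ns_t.
- by move=> i; split; [exact: sqnorm_run | exact: c_le].
- move=> i; rewrite ns_t !run_catw wordmx_cat wordmx_wpow -mulmxA -mulmxBr.
  by rewrite sqnorm_unitary //; apply: unitary_wordmx.
Qed.

Lemma LND_wprefix_womega v : LND A lambda v ->
  infinite_set [set n : nat | forall x w', LND A lambda (catw (wprefix v n) (womega x w'))].
Proof.
case/LND_witness=> [psi [ns [c [psiF psi1 ns_incr lt_c c_le]]]].
have [delta delta_gt0 LND_close] := LND_of_close psiF psi1 lt_c.
have [_ hU] := wfA; apply: infinite_set_unbounded => M.
exists (ns M.+1) => [|x w']; first exact: increasing_ge.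
pose y := run A v (ns M.+1); have y1 : sqnorm y = 1 := sqnorm_run _ _.
have [g g_incr close] := increasing_seq_unbounded
  (unitary_recurrence (unitary_wordmx (x :: w') hU) y1 delta_gt0).
apply: (LND_close _ (fun i => size (wprefix v (ns M.+1)) + g i * size (x :: w'))%N
                    (fun=> y)).
- by move=> i; rewrite ltn_add2l ltn_pmul2r.
- by move=> _; split; [exact: y1 | exact: c_le].
- by move=> i; rewrite run_catw wprefix_womega wordmx_wpow -run_wordmx; apply: close.
Qed.

End NonDisturbing.

Unset Implicit Arguments.
Theorem theorem2 (R : realType) (Sigma : finType) (d : nat)
  (A : qaut R Sigma d) (lambda : R) :
  wf_qaut A -> 0 <= lambda -> lambda < 1 ->
  (* (1) *)
  (forall (w : seq Sigma) (u : seq Sigma) (v : oword Sigma),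
     w != [::] ->
     LND A lambda (catw u v) ->
     infinite_set [set k : nat | (0 < k)%N /\
                                 LND A lambda (catw (u ++ wpow w k) v)]) /\
  (* (2) *)
  (forall v : oword Sigma,
     LND A lambda v ->
     infinite_set [set n : nat | forall (x : Sigma) (w' : seq Sigma),
                                 LND A lambda (catw (wprefix v n) (womega x w'))]).
Proof.
move=> wfA lambda_ge0 _.
by split=> [w u v _ | v]; [apply: LND_catw_wpow | apply: LND_wprefix_womega].
Qed.
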